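(* Let $X,X_1,X_2,\dots$ be random variables in a sub-linear expectation space $(\Omega,\mathscr H,\hat{\mathbb E})$ with $\{X_n\}$ independent, $X_n\overset d=X$ for all $n$, and $\hat{\mathbb E}[X]=\hat{\mathcal E}[X]=0$. Let $S_n=\sum_{i=1}^nX_i$, $V_n^2=\sum_{i=1}^nX_i^2$, $l(x)=\hat{\mathbb E}[X^2\wedge x^2]$, and assume: (I) $\mathbb V(|X|\ge x)=o(x^{-2}l(x))$ as $x\to\infty$; (II) $\limsup_{x\to\infty}\hat{\mathbb E}[X^2\wedge x^2]/\hat{\mathcal E}[X^2\wedge x^2]<\infty$; (III) $\hat{\mathbb E}[(|X|-c)^+]\to0$ as $c\to\infty$; (IV) $x_n\to\infty$ and $x_n=o(\sqrt n)$. Let $b_0=\inf\{x\ge0:l(x)>0\}$ and $z_n=\inf\{s\ge b_0+1: l(s)/s^2\le x_n^2/n\}$. Then, as $n\to\infty$, $$\mathbb V\big(S_n\ge x_nV_n,\ V_n^2\ge 9nl(z_n)\big)\le\exp\{-x_n^2+o(x_n^2)\}.$$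
   Context: Sub-linear expectation space: $\mathscr H$ is a linear space of real functions on a measurable space $(\Omega,\mathcal F)$, closed under $\varphi(X_1,\dots,X_n)$ for $\varphi$ bounded continuous or locally Lipschitz with polynomial growth ($|\varphi(x)-\varphi(y)|\le C(1+|x|^m+|y|^m)|x-y|$); $\hat{\mathbb E}:\mathscr H\to[-\infty,\infty]$ is monotone, constant preserving, sub-additive and positively homogeneous. $\hat{\mathcal E}[X]=-\hat{\mathbb E}[-X]$; $\mathbb V(A)=\inf\{\hat{\mathbb E}[\xi]:I_A\le\xi,\xi\in\mathscr H\}$. Independence: $\mathbf Y$ is independent of $\mathbf X$ if $\hat{\mathbb E}[\varphi(\mathbf X,\mathbf Y)]=\hat{\mathbb E}[\hat{\mathbb E}[\varphi(\mathbf x,\mathbf Y)]|_{\mathbf x=\mathbf X}]$ for all such locally Lipschitz $\varphi$ (whenever the relevant expectations are finite); $\{X_n\}$ is independent if $X_{i+1}$ is independent of $(X_1,\dots,X_i)$ for each $i$. $X_n\overset d=X$ means $\hat{\mathbb E}[\varphi(X_n)]=\hat{\mathbb E}[\varphi(X)]$ for all locally Lipschitz $\varphi$ of polynomial growth. $a\wedge b=\min(a,b)$. *)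

From Stdlib Require Import Reals Lra.
From Coquelicot Require Import Coquelicot.
Open Scope R_scope.

(* Vectors in R^n are represented as  nat -> R , only coordinates      *)
(* 0..n-1 being relevant.  |x|_n = sum_{i<n} |x_i|  (any norm on R^n   *)
(* gives the same function classes below).                             *)
Fixpoint vnorm (n : nat) (x : nat -> R) : R :=
  match n with
  | O => 0
  | S k => vnorm k x + Rabs (x k)
  end.

Definition Cb (n : nat) (phi : (nat -> R) -> R) : Prop :=
  (forall x y, (forall i, (i < n)%nat -> x i = y i) -> phi x = phi y) /\
  (exists M, forall x, Rabs (phi x) <= M) /\
  (forall x eps, 0 < eps -> exists delta, 0 < delta /\
     forall y, vnorm n (fun i => y i - x i) < delta -> Rabs (phi y - phi x) < eps).

Definition Clip (n : nat) (phi : (nat -> R) -> R) : Prop :=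
  exists (C : R) (m : nat), forall x y,
    Rabs (phi x - phi y)
      <= C * (1 + vnorm n x ^ m + vnorm n y ^ m) * vnorm n (fun i => x i - y i).

Definition Clip1 (phi : R -> R) : Prop :=
  exists (C : R) (m : nat), forall x y,
    Rabs (phi x - phi y) <= C * (1 + Rabs x ^ m + Rabs y ^ m) * Rabs (x - y).

(* Sub-linear expectation space (Omega, H, E).  E is defined on all    *)
(* functions Omega -> R, but the axioms only constrain it on H.        *)
Record SLESpace (Omega : Type) := {
  H : (Omega -> R) -> Prop;
  E : (Omega -> R) -> Rbar;
  H_zero : H (fun _ => 0);
  H_add : forall X Y, H X -> H Y -> H (fun w => X w + Y w);
  H_scal : forall (c : R) X, H X -> H (fun w => c * X w);
  H_comp : forall (n : nat) (Xs : nat -> Omega -> R) (phi : (nat -> R) -> R),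
      (forall i, (i < n)%nat -> H (Xs i)) -> (Cb n phi \/ Clip n phi) ->
      H (fun w => phi (fun i => Xs i w));
  E_mono : forall X Y, H X -> H Y -> (forall w, X w <= Y w) -> Rbar_le (E X) (E Y);
  E_const : forall c : R, E (fun _ => c) = Finite c;
  E_subadd : forall X Y, H X -> H Y -> ex_Rbar_plus (E X) (E Y) ->
      Rbar_le (E (fun w => X w + Y w)) (Rbar_plus (E X) (E Y));
  E_poshom : forall (lam : R) X, H X -> 0 < lam ->
      E (fun w => lam * X w) = Rbar_mult (Finite lam) (E X)
}.
Arguments H {Omega} s _.
Arguments E {Omega} s _.

Definition Elow {Omega} (Sp : SLESpace Omega) (X : Omega -> R) : Rbar :=
  Rbar_opp (E Sp (fun w => - X w)).

Definition Vcap {Omega} (Sp : SLESpace Omega) (A : Omega -> Prop) : Rbar :=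
  Glb_Rbar (fun r : R => exists xi : Omega -> R,
    H Sp xi /\ (forall w, 0 <= xi w /\ (A w -> 1 <= xi w)) /\ E Sp xi = Finite r).

Definition vjoin (n : nat) (x y : nat -> R) : nat -> R :=
  fun k => if (k <? n)%nat then x k else y (k - n)%nat.

Definition indep {Omega} (Sp : SLESpace Omega) (n m : nat)
    (Xv Yv : Omega -> nat -> R) : Prop :=
  forall phi : (nat -> R) -> R, Clip (n + m) phi ->
    let psi := fun x : nat -> R => real (E Sp (fun w => phi (vjoin n x (Yv w)))) in
    (forall x, is_finite (E Sp (fun w => Rabs (phi (vjoin n x (Yv w)))))) ->
    is_finite (E Sp (fun w => Rabs (psi (Xv w)))) ->
    E Sp (fun w => phi (vjoin n (Xv w) (Yv w))) = E Sp (fun w => psi (Xv w)).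

(* {X_n}_{n>=1} is independent: X_{i+1} independent of (X_1,...,X_i). *)
Definition indep_seq {Omega} (Sp : SLESpace Omega) (X : nat -> Omega -> R) : Prop :=
  forall i : nat, (1 <= i)%nat ->
    indep Sp i 1 (fun w k => X (S k) w) (fun w _ => X (S i) w).

Definition same_dist {Omega} (Sp : SLESpace Omega) (Y Z : Omega -> R) : Prop :=
  forall phi : R -> R, Clip1 phi -> E Sp (fun w => phi (Y w)) = E Sp (fun w => phi (Z w)).

Fixpoint sum1 (f : nat -> R) (n : nat) : R :=
  match n with
  | O => 0
  | S k => sum1 f k + f (S k)
  end.

(* l(x) = E[X^2 /\ x^2]  (finite: it lies in [0, x^2]) *)
Definition lfun {Omega} (Sp : SLESpace Omega) (X : Omega -> R) (x : R) : R :=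
  real (E Sp (fun w => Rmin (X w ^ 2) (x ^ 2))).

Definition b0 {Omega} (Sp : SLESpace Omega) (X : Omega -> R) : R :=
  real (Glb_Rbar (fun x => 0 <= x /\ 0 < lfun Sp X x)).

Definition zn {Omega} (Sp : SLESpace Omega) (X : Omega -> R) (xn : R) (n : nat) : R :=
  real (Glb_Rbar (fun s => b0 Sp X + 1 <= s /\
                           lfun Sp X s / s ^ 2 <= xn ^ 2 / INR n)).

(* Chernoff bound after truncation at the level z = z_n, where l(z) = (x_n^2/n) z^2.
   On the event, V_n >= 3 x_n z because 9 n l(z) = 9 x_n^2 z^2.  Writing u_i = X_i / z
   and splitting u <= clip u + (1 + c/2) ramp u + u^2/(2c), with c proportional to
   V_n / (z x_n), shows that either sum_i ramp u_i >= x_n^2 / 10^4 or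
   sum_i clip u_i >= 2.9699 x_n^2.  Both alternatives are bounded by exponential Chebyshev.
   Independence turns the upper expectation of a product of positive Lipschitz factors into
   the product of their expectations, and each factor is 1 + O(x_n^2 / n): for the ramp
   through the capacity condition (I), for the clipped part through centering and a dyadic
   bound on E[(|X| - z)^+] that combines (I) and (III).  The result 2 exp(-1.03 x_n^2) is
   below exp(-x_n^2) as soon as x_n >= 10. *)

From Stdlib Require Import Reals Lra Lia Classical FunctionalExtensionality.
From Coquelicot Require Import Coquelicot.
Open Scope R_scope.

Lemma exp_le_compat a b : a <= b -> exp a <= exp b.
Proof. intros [h | ->]; [left; apply exp_increasing |]; lra. Qed.

Lemma exp_ge_1 a : 0 <= a -> 1 <= exp a.
Proof. intros h; rewrite <- exp_0; apply exp_le_compat, h. Qed.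

Lemma exp_le_1_plus_mul y : exp y <= 1 + y * exp y.
Proof.
  pose proof (exp_ineq1_le (- y)) as h. rewrite exp_Ropp in h.
  pose proof (exp_pos y).
  assert (hm : exp y * (1 - y) <= exp y * / exp y) by (apply Rmult_le_compat_l; lra).
  rewrite Rinv_r in hm; lra.
Qed.

Lemma exp_le_quadratic y t : 0 <= t -> y <= t -> exp y <= 1 + y + exp t * y ^ 2.
Proof.
  intros ht hy. pose proof (exp_le_1_plus_mul y). pose proof (exp_ineq1_le y).
  pose proof (exp_ge_1 t ht).
  destruct (Rle_dec 0 y).
  - assert (exp y <= exp t) by (apply exp_le_compat; lra).
    assert (y * (exp y - 1) <= y * (y * exp y)) by (apply Rmult_le_compat_l; lra).
    assert (y * y * exp y <= y * y * exp t) by (apply Rmult_le_compat_l; nra).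
    nra.
  - assert (y * (exp y - 1) <= y * y) by nra. nra.
Qed.

Lemma exp_le_affine s r : 0 <= s -> 0 <= r <= 1 -> exp (s * r) <= 1 + s * exp s * r.
Proof.
  intros hs hr. pose proof (exp_le_1_plus_mul (s * r)).
  assert (exp (s * r) <= exp s) by (apply exp_le_compat; nra).
  assert (s * r * exp (s * r) <= s * r * exp s) by (apply Rmult_le_compat_l; nra). nra.
Qed.

Lemma exp_lipschitz a b T :
  a <= T -> b <= T -> Rabs (exp a - exp b) <= exp T * Rabs (a - b).
Proof.
  assert (key : forall a b, a <= b -> b <= T -> exp b - exp a <= exp T * (b - a)).
  { intros a0 b0 h1 h2. pose proof (exp_le_1_plus_mul (b0 - a0)). pose proof (exp_pos a0).
    assert (e : exp a0 * exp (b0 - a0) = exp b0) by (rewrite <- exp_plus; f_equal; ring).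
    assert (exp b0 <= exp T) by (apply exp_le_compat; lra).
    assert (exp a0 * exp (b0 - a0) <= exp a0 * (1 + (b0 - a0) * exp (b0 - a0)))
      by (apply Rmult_le_compat_l; lra).
    nra. }
  intros ha hb. destruct (Rle_dec a b).
  - pose proof (key a b r hb). pose proof (exp_le_compat a b r).
    rewrite !Rabs_left1 by lra. lra.
  - pose proof (key b a ltac:(lra) ha). pose proof (exp_le_compat b a ltac:(lra)).
    rewrite !Rabs_pos_eq by lra. lra.
Qed.

Lemma exp_comp_lipschitz (g : R -> R) T K : (forall a, g a <= T) ->
  (forall a b, Rabs (g a - g b) <= K * Rabs (a - b)) ->
  forall a b, Rabs (exp (g a) - exp (g b)) <= exp T * K * Rabs (a - b).
Proof.
  intros hT hK a b. eapply Rle_trans; [apply exp_lipschitz; auto |]. rewrite Rmult_assoc.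
  apply Rmult_le_compat_l; [pose proof (exp_pos T); lra | auto].
Qed.

Lemma pow_le_exp_mul c y n : 0 <= c -> c <= 1 + y -> c ^ n <= exp (INR n * y).
Proof.
  intros h1 h2. pose proof (exp_ineq1_le y).
  induction n.
  - simpl. rewrite Rmult_0_l, exp_0. lra.
  - rewrite S_INR. replace ((INR n + 1) * y) with (INR n * y + y) by ring.
    rewrite exp_plus. simpl. rewrite Rmult_comm.
    apply Rmult_le_compat; try lra. apply pow_le; lra.
Qed.

Lemma exp_half_le : exp (1/2) <= 7/4.
Proof.
  pose proof exp_le_3. pose proof (exp_pos (1/2)).
  assert (exp (1/2) * exp (1/2) = exp 1) by (rewrite <- exp_plus; f_equal; lra).
  nra.
Qed.

Lemma INR_le_pow2 K : INR K <= 2 ^ K.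
Proof.
  induction K; [simpl; lra |]. rewrite S_INR. simpl.
  assert (1 <= 2 ^ K) by (apply pow_R1_Rle; lra). lra.
Qed.

Lemma exists_pow2_mul_ge a z : 0 < z -> exists K, a <= 2 ^ K * z.
Proof.
  intros hz. destruct (INR_unbounded (a / z)) as [K hK]. exists K.
  pose proof (INR_le_pow2 K).
  apply Rmult_le_reg_r with (/ z); [apply Rinv_0_lt_compat; lra |].
  rewrite Rmult_assoc, Rinv_r by lra. unfold Rdiv in hK. lra.
Qed.

(** * Truncation and the self-normalized dichotomy *)

Definition clip (u : R) : R := Rmax (-1) (Rmin u 1).
Definition ramp (u : R) : R := Rmin 1 (Rmax 0 (2 * Rabs u - 1)).

Ltac unfold_piecewise :=
  unfold clip, ramp, Rmin, Rmax, Rabs in *;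
  repeat destruct Rle_dec; repeat destruct Rcase_abs.

Lemma clip_lipschitz a b : Rabs (clip a - clip b) <= Rabs (a - b).
Proof. unfold_piecewise; lra. Qed.

Lemma ramp_lipschitz a b : Rabs (ramp a - ramp b) <= 2 * Rabs (a - b).
Proof. unfold_piecewise; lra. Qed.

Lemma clip_bounds u : -1 <= clip u <= 1.
Proof. unfold_piecewise; lra. Qed.

Lemma ramp_bounds u : 0 <= ramp u <= 1.
Proof. unfold_piecewise; lra. Qed.

Lemma clip_sq_le u : clip u ^ 2 <= Rmin (u ^ 2) 1.
Proof. unfold_piecewise; simpl; nra. Qed.

Lemma clip_le_tail u : clip u <= u + Rmax (Rabs u - 1) 0.
Proof. unfold_piecewise; lra. Qed.

Lemma ramp_pos_abs_gt u : 0 < ramp u -> 1/2 < Rabs u.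
Proof. unfold_piecewise; lra. Qed.

Lemma ramp_eq_1 u : 1 <= Rabs u -> ramp u = 1.
Proof. unfold_piecewise; lra. Qed.

Lemma le_clip_ramp_sq u c : 0 < c -> u <= clip u + (1 + c/2) * ramp u + u ^ 2 / (2 * c).
Proof.
  intros hc. pose proof (ramp_bounds u).
  assert (0 <= u ^ 2 / (2 * c)) by (apply Rdiv_le_0_compat; nra).
  assert (0 <= (1 + c/2) * ramp u) by (apply Rmult_le_pos; lra).
  destruct (Rle_dec 1 u).
  - rewrite ramp_eq_1 by (rewrite Rabs_pos_eq; lra).
    replace (clip u) with 1 by (unfold_piecewise; lra).
    assert (u <= c/2 + u ^ 2 / (2 * c)); [|lra].
    apply Rmult_le_reg_l with (2 * c); [lra|].
    replace (2 * c * (c/2 + u ^ 2 / (2 * c))) with (c * c + u ^ 2) by (field; lra).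
    pose proof (pow2_ge_0 (u - c)). nra.
  - assert (u <= clip u) by (unfold_piecewise; lra). lra.
Qed.

Lemma scaled_lipschitz (phi : R -> R) L t z : 0 < z -> 0 <= t ->
  (forall a b, Rabs (phi a - phi b) <= L * Rabs (a - b)) ->
  forall a b, Rabs (t * phi (a / z) - t * phi (b / z)) <= t * L / z * Rabs (a - b).
Proof.
  intros hz ht hphi a b. rewrite <- Rmult_minus_distr_l, Rabs_mult, (Rabs_pos_eq t) by lra.
  eapply Rle_trans; [apply Rmult_le_compat_l; [lra | apply hphi] |].
  replace (a / z - b / z) with ((a - b) * / z) by (field; lra).
  rewrite Rabs_mult, Rabs_inv, (Rabs_pos_eq z) by lra. right. field. lra.
Qed.

Lemma Rabs_div_pos v z : 0 < z -> Rabs (v / z) = Rabs v / z.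
Proof. intros hz. unfold Rdiv. rewrite Rabs_mult, Rabs_inv, (Rabs_pos_eq z) by lra. auto. Qed.

Lemma tail_div v z : 0 < z -> Rmax (Rabs (v / z) - 1) 0 = Rmax (Rabs v - z) 0 / z.
Proof.
  intros hz. rewrite Rabs_div_pos by auto.
  replace (Rabs v / z - 1) with ((Rabs v - z) * / z) by (field; lra).
  pose proof (Rinv_0_lt_compat z hz). unfold Rmax, Rdiv. repeat destruct Rle_dec; nra.
Qed.

Lemma min_sq_div v z : 0 < z -> Rmin ((v / z) ^ 2) 1 = Rmin (v ^ 2) (z ^ 2) / z ^ 2.
Proof.
  intros hz. assert (0 < z ^ 2) by (apply pow_lt; lra).
  replace ((v / z) ^ 2) with (v ^ 2 / z ^ 2) by (field; lra).
  assert (e : v ^ 2 = v ^ 2 / z ^ 2 * z ^ 2) by (field; lra).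
  unfold Rmin. repeat destruct Rle_dec; try (field; lra).
  - exfalso. nra.
  - exfalso. apply n. apply Rmult_le_reg_r with (z ^ 2); nra.
Qed.

Lemma sum1_le f g n : (forall i, f i <= g i) -> sum1 f n <= sum1 g n.
Proof. intros h. induction n; simpl. lra. pose proof (h (S n)). lra. Qed.

Lemma sum1_plus f g n : sum1 (fun i => f i + g i) n = sum1 f n + sum1 g n.
Proof. induction n; simpl. lra. rewrite IHn. ring. Qed.

Lemma sum1_scal c f n : sum1 (fun i => c * f i) n = c * sum1 f n.
Proof. induction n; simpl. lra. rewrite IHn. ring. Qed.

Lemma sum1_nonneg f n : (forall i, 0 <= f i) -> 0 <= sum1 f n.
Proof. intros h. induction n; simpl. lra. pose proof (h (S n)). lra. Qed.

Lemma clip_sum_ge (u : nat -> R) n x sg : 0 < x -> 3 * x <= sg ->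
  sum1 u n >= x * sg -> sum1 (fun i => u i ^ 2) n = sg ^ 2 ->
  sum1 (fun i => ramp (u i)) n < / 10000 * x ^ 2 ->
  sum1 (fun i => clip (u i)) n >= 29699 / 10000 * x ^ 2.
Proof.
  intros hx hsg hS hQ hR.
  (* c balances the ramp and quadratic terms of le_clip_ramp_sq at x * sg / 200 each *)
  set (c := 100 * sg / x).
  assert (hc : 0 < c) by (unfold c; apply Rdiv_lt_0_compat; nra).
  assert (hsum : sum1 u n <= sum1 (fun i => clip (u i) + (1 + c/2) * ramp (u i)
                                              + / (2 * c) * u i ^ 2) n).
  { apply sum1_le. intros i. pose proof (le_clip_ramp_sq (u i) c hc).
    replace (/ (2 * c) * u i ^ 2) with (u i ^ 2 / (2 * c)) by (field; lra). lra. }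
  rewrite !sum1_plus, !sum1_scal, hQ in hsum.
  set (R0 := sum1 (fun i => ramp (u i)) n) in *.
  assert (/ (2 * c) * sg ^ 2 = x * sg / 200) by (unfold c; field; lra).
  assert (c / 2 * R0 <= x * sg / 200).
  { assert (0 <= R0) by (apply sum1_nonneg; intros; apply ramp_bounds).
    assert (c / 2 * R0 <= c / 2 * (/ 10000 * x ^ 2)) by (apply Rmult_le_compat_l; lra).
    replace (c / 2 * (/ 10000 * x ^ 2)) with (x * sg / 200) in * by (unfold c; field; lra).
    lra. }
  assert (x * sg >= 3 * x ^ 2) by (simpl; nra).
  lra.
Qed.

Lemma self_normalized_dichotomy (a : nat -> R) n x z : 0 < x -> 0 < z ->
  sum1 a n >= x * sqrt (sum1 (fun i => a i ^ 2) n) ->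
  sum1 (fun i => a i ^ 2) n >= 9 * x ^ 2 * z ^ 2 ->
  sum1 (fun i => ramp (a i / z)) n >= / 10000 * x ^ 2 \/
  sum1 (fun i => clip (a i / z)) n >= 29699 / 10000 * x ^ 2.
Proof.
  intros hx hz hS hV.
  set (Q := sum1 (fun i => a i ^ 2) n) in *.
  assert (hQ : 0 <= Q) by (apply sum1_nonneg; intros; apply pow2_ge_0).
  pose proof (sqrt_pos Q). pose proof (sqrt_sqrt Q hQ) as hsq.
  assert (h3 : 3 * x * z <= sqrt Q).
  { destruct (Rle_lt_dec (3 * x * z) (sqrt Q)); auto.
    assert (sqrt Q * sqrt Q < (3 * x * z) * (3 * x * z)) by nra. simpl in hV. nra. }
  destruct (Rlt_le_dec (sum1 (fun i => ramp (a i / z)) n) (/ 10000 * x ^ 2)); [right | left; lra].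
  apply clip_sum_ge with (sg := sqrt Q / z); auto.
  - apply Rmult_le_reg_r with z; auto. replace (sqrt Q / z * z) with (sqrt Q) by (field; lra). lra.
  - replace (fun i => a i / z) with (fun i => / z * a i)
      by (apply functional_extensionality; intros; field; lra).
    rewrite sum1_scal. apply Rle_ge, Rmult_le_reg_r with z; auto.
    replace (/ z * sum1 a n * z) with (sum1 a n) by (field; lra).
    replace (x * (sqrt Q / z) * z) with (x * sqrt Q) by (field; lra). lra.
  - replace (fun i => (a i / z) ^ 2) with (fun i => / z ^ 2 * a i ^ 2)
      by (apply functional_extensionality; intros; field; lra).
    rewrite sum1_scal. fold Q. replace ((sqrt Q / z) ^ 2) with (sqrt Q * sqrt Q / z ^ 2)
      by (field; lra). rewrite hsq. field. lra.
Qed.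

Lemma exp_chebyshev_dichotomy (a : nat -> R) n x z s t : 0 < x -> 0 < z -> 0 < s -> 0 < t ->
  sum1 a n >= x * sqrt (sum1 (fun i => a i ^ 2) n) ->
  sum1 (fun i => a i ^ 2) n >= 9 * x ^ 2 * z ^ 2 ->
  1 <= exp (- (s * (/ 10000 * x ^ 2))) * exp (s * sum1 (fun i => ramp (a i / z)) n)
       + exp (- (t * (29699 / 10000 * x ^ 2))) * exp (t * sum1 (fun i => clip (a i / z)) n).
Proof.
  intros hx hz hs ht e1 e2. rewrite <- !exp_plus.
  pose proof (exp_pos (- (s * (/ 10000 * x ^ 2)) + s * sum1 (fun i => ramp (a i / z)) n)).
  pose proof (exp_pos (- (t * (29699 / 10000 * x ^ 2)) + t * sum1 (fun i => clip (a i / z)) n)).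
  destruct (self_normalized_dichotomy a n x z hx hz e1 e2) as [d | d].
  - assert (1 <= exp (- (s * (/ 10000 * x ^ 2)) + s * sum1 (fun i => ramp (a i / z)) n));
      [apply exp_ge_1; apply Rge_le in d; nra | lra].
  - assert (1 <= exp (- (t * (29699 / 10000 * x ^ 2)) + t * sum1 (fun i => clip (a i / z)) n));
      [apply exp_ge_1; apply Rge_le in d; nra | lra].
Qed.

(** * Sub-linear expectations *)

Section SubLinearExpectation.

Context {Omega : Type} (Sp : SLESpace Omega).

Lemma H_const c : H Sp (fun _ => c).
Proof.
  apply (H_comp Omega Sp 0 (fun _ _ => 0) (fun _ => c)); [intros; lia |].
  right. exists 0, 0%nat. intros. rewrite Rminus_diag, Rabs_R0. simpl. lra.
Qed.

Lemma H_comp_growth1 (X : Omega -> R) phi C : H Sp X ->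
  (forall a b, Rabs (phi a - phi b) <= C * (1 + Rabs a + Rabs b) * Rabs (a - b)) ->
  H Sp (fun w => phi (X w)).
Proof.
  intros hX hphi.
  apply (H_comp Omega Sp 1 (fun _ => X) (fun v => phi (v 0%nat))); auto.
  right. exists C, 1%nat. intros x y. simpl. rewrite !Rplus_0_l, !Rmult_1_r. apply hphi.
Qed.

Lemma H_comp_lipschitz (X : Omega -> R) phi C : H Sp X -> 0 <= C ->
  (forall a b, Rabs (phi a - phi b) <= C * Rabs (a - b)) -> H Sp (fun w => phi (X w)).
Proof.
  intros hX hC hphi. apply H_comp_growth1 with C; auto. intros a b.
  eapply Rle_trans; [apply hphi |]. apply Rmult_le_compat_r; [apply Rabs_pos |].
  pose proof (Rabs_pos a). pose proof (Rabs_pos b). nra.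
Qed.

Lemma H_comp_exp (X : Omega -> R) (g : R -> R) T K : H Sp X -> 0 <= K ->
  (forall a, g a <= T) -> (forall a b, Rabs (g a - g b) <= K * Rabs (a - b)) ->
  H Sp (fun w => exp (g (X w))).
Proof.
  intros hX hK hT hl.
  apply (H_comp_lipschitz X (fun a => exp (g a)) (exp T * K)); auto.
  - pose proof (exp_pos T). nra.
  - apply exp_comp_lipschitz; auto.
Qed.

Definition E_le (Y : Omega -> R) (a : R) : Prop := Rbar_le (E Sp Y) (Finite a).

Lemma E_le_mono Y1 Y2 a :
  H Sp Y1 -> H Sp Y2 -> (forall w, Y1 w <= Y2 w) -> E_le Y2 a -> E_le Y1 a.
Proof. unfold E_le; intros. eapply Rbar_le_trans; [apply E_mono |]; eauto. Qed.

Lemma E_le_weaken Y a b : E_le Y a -> a <= b -> E_le Y b.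
Proof. unfold E_le; intros. eapply Rbar_le_trans; eauto. Qed.

Lemma E_le_const c : E_le (fun _ => c) c.
Proof. unfold E_le; rewrite E_const; simpl; lra. Qed.

Lemma E_le_add Y1 Y2 a b : H Sp Y1 -> H Sp Y2 ->
  E_le Y1 a -> E_le Y2 b -> E_le (fun w => Y1 w + Y2 w) (a + b).
Proof.
  unfold E_le; intros h1 h2 e1 e2.
  assert (ex_Rbar_plus (E Sp Y1) (E Sp Y2))
    by (destruct (E Sp Y1), (E Sp Y2); simpl in *; auto; contradiction).
  eapply Rbar_le_trans; [apply E_subadd; auto |].
  destruct (E Sp Y1), (E Sp Y2); simpl in *; try lra; contradiction.
Qed.

Lemma E_le_scal Y a lam : H Sp Y -> 0 < lam -> E_le Y a -> E_le (fun w => lam * Y w) (lam * a).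
Proof.
  unfold E_le; intros h hl e. rewrite E_poshom; auto.
  destruct (E Sp Y); simpl in *; try contradiction.
  - apply Rmult_le_compat_l; lra.
  - unfold Rbar_mult, Rbar_mult'. destruct (Rle_dec 0 lam); [| lra].
    destruct (Rle_lt_or_eq_dec 0 lam r); simpl; auto. lra.
Qed.

Lemma E_finite_between Y a b : H Sp Y -> (forall w, a <= Y w <= b) ->
  exists r, E Sp Y = Finite r /\ a <= r <= b.
Proof.
  intros hY hb.
  pose proof (E_mono Omega Sp _ Y (H_const a) hY (fun w => proj1 (hb w))) as e1.
  pose proof (E_mono Omega Sp Y _ hY (H_const b) (fun w => proj2 (hb w))) as e2.
  rewrite E_const in e1, e2. destruct (E Sp Y); simpl in *; try contradiction.
  exists r; auto.
Qed.

Lemma E_le_finite Y r a : E Sp Y = Finite r -> E_le Y a -> r <= a.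
Proof. unfold E_le; intros e h; rewrite e in h; exact h. Qed.

Lemma Vcap_le (A : Omega -> Prop) xi a : H Sp xi ->
  (forall w, 0 <= xi w /\ (A w -> 1 <= xi w)) -> E_le xi a -> Rbar_le (Vcap Sp A) (Finite a).
Proof.
  intros hx hb he.
  pose proof (E_mono Omega Sp _ xi (H_const 0) hx (fun w => proj1 (hb w))) as e1.
  rewrite E_const in e1. unfold E_le in he.
  destruct (E Sp xi) eqn:Ex; simpl in *; try contradiction.
  eapply Rbar_le_trans; [apply (proj1 (Glb_Rbar_correct _)) | simpl; exact he].
  exists xi. auto.
Qed.

Lemma E_le_Vcap (A : Omega -> Prop) g : H Sp g -> (forall w, 0 <= g w <= 1) ->
  (forall w, 0 < g w -> A w) -> Rbar_le (E Sp g) (Vcap Sp A).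
Proof.
  intros hg hb hA. apply (proj2 (Glb_Rbar_correct _)).
  intros r [xi [hx [hxb <-]]]. apply E_mono; auto.
  intros w. destruct (hb w), (hxb w) as [hx0 hx1].
  destruct (Rle_lt_dec (g w) 0); [lra |]. specialize (hx1 (hA w r0)). lra.
Qed.

End SubLinearExpectation.

(** * Products of independent factors *)

Fixpoint prod_map (f : R -> R) (n : nat) (v : nat -> R) : R :=
  match n with O => 1 | S k => prod_map f k v * f (v k) end.

Lemma prod_map_pos f a n v : 0 < a -> (forall y, a <= f y) -> 0 < prod_map f n v.
Proof. intros ha hf. induction n; simpl; [lra |]. pose proof (hf (v n)). nra. Qed.

Lemma prod_map_ext f n v v' :
  (forall k, (k < n)%nat -> v k = v' k) -> prod_map f n v = prod_map f n v'.
Proof.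
  induction n; simpl; intros hv; auto.
  rewrite IHn, hv; auto.
Qed.

Lemma prod_map_bounds f B n v : (forall y, 0 <= f y <= B) -> 0 <= prod_map f n v <= B ^ n.
Proof.
  intros hf. induction n; simpl; [lra |]. destruct (hf (v n)).
  split; [apply Rmult_le_pos; lra |]. rewrite Rmult_comm. apply Rmult_le_compat; lra.
Qed.

Lemma vnorm_nonneg n d : 0 <= vnorm n d.
Proof. induction n; simpl; [lra |]. pose proof (Rabs_pos (d n)); lra. Qed.

Lemma prod_map_lipschitz f B L n x y : (forall y, 0 <= f y <= B) -> 1 <= B -> 0 <= L ->
  (forall y1 y2, Rabs (f y1 - f y2) <= L * Rabs (y1 - y2)) ->
  Rabs (prod_map f n x - prod_map f n y) <= L * B ^ n * vnorm n (fun i => x i - y i).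
Proof.
  intros hf hB hL hl. induction n; simpl.
  - rewrite Rminus_diag, Rabs_R0. lra.
  - replace (prod_map f n x * f (x n) - prod_map f n y * f (y n)) with
      ((prod_map f n x - prod_map f n y) * f (x n) + prod_map f n y * (f (x n) - f (y n)))
      by ring.
    eapply Rle_trans; [apply Rabs_triang |]. rewrite !Rabs_mult.
    destruct (hf (x n)). destruct (prod_map_bounds f B n y hf).
    rewrite (Rabs_pos_eq (f (x n))), (Rabs_pos_eq (prod_map f n y)) by lra.
    pose proof (vnorm_nonneg n (fun i => x i - y i)).
    pose proof (Rabs_pos (prod_map f n x - prod_map f n y)).
    pose proof (hl (x n) (y n)). pose proof (Rabs_pos (x n - y n)).
    assert (1 <= B ^ n) by (apply pow_R1_Rle; lra).
    assert (Rabs (prod_map f n x - prod_map f n y) * f (x n)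
            <= L * B ^ n * vnorm n (fun i => x i - y i) * B) by (apply Rmult_le_compat; lra).
    assert (prod_map f n y * Rabs (f (x n) - f (y n)) <= B ^ n * (L * Rabs (x n - y n)))
      by (apply Rmult_le_compat; try lra; apply Rabs_pos).
    assert (L * B ^ n * Rabs (x n - y n) <= L * (B * B ^ n) * Rabs (x n - y n)).
    { apply Rmult_le_compat_r; [lra |]. apply Rmult_le_compat_l; nra. }
    nra.
Qed.

Lemma prod_map_Clip f B L n : (forall y, 0 <= f y <= B) -> 1 <= B -> 0 <= L ->
  (forall y1 y2, Rabs (f y1 - f y2) <= L * Rabs (y1 - y2)) -> Clip n (prod_map f n).
Proof.
  intros. exists (L * B ^ n), 0%nat. intros x y. simpl.
  eapply Rle_trans; [apply (prod_map_lipschitz f B L); auto |].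
  apply Rmult_le_compat_r; [apply vnorm_nonneg |].
  assert (0 <= L * B ^ n) by (apply Rmult_le_pos; auto; apply pow_le; lra). nra.
Qed.

Lemma prod_map_exp g n (v : nat -> R) :
  prod_map (fun y => exp (g y)) n (fun k => v (S k)) = exp (sum1 (fun i => g (v i)) n).
Proof. induction n; simpl; [rewrite exp_0; auto |]. rewrite IHn, exp_plus; auto. Qed.

Lemma prod_map_vjoin f i x (y : nat -> R) :
  prod_map f (i + 1) (vjoin i x y) = prod_map f i x * f (y 0%nat).
Proof.
  rewrite Nat.add_1_r. simpl. f_equal.
  - apply prod_map_ext. intros k hk. unfold vjoin. now rewrite (proj2 (Nat.ltb_lt k i) hk).
  - unfold vjoin. rewrite Nat.ltb_irrefl, Nat.sub_diag. auto.
Qed.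

Section Independence.

Context {Omega : Type} (Sp : SLESpace Omega) (X : Omega -> R) (Xs : nat -> Omega -> R).
Hypothesis hXs : forall n, (1 <= n)%nat -> H Sp (Xs n).
Hypothesis hind : indep_seq Sp Xs.
Hypothesis hsd : forall n, (1 <= n)%nat -> same_dist Sp (Xs n) X.
Hypothesis hX : H Sp X.

Section ProductFormula.

Variables (f : R -> R) (a B L c : R).
Hypothesis ha : 0 < a.
Hypothesis hB : 1 <= B.
Hypothesis hL : 0 <= L.
Hypothesis hf : forall y, a <= f y <= B.
Hypothesis hfL : forall y1 y2, Rabs (f y1 - f y2) <= L * Rabs (y1 - y2).
Hypothesis hc : E Sp (fun w => f (X w)) = Finite c.

(* [prod_map f n v] multiplies f (v 0), ..., f (v (n-1)), while the variables are X_1, ..., X_n. *)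
Let prodX n := fun w => prod_map f n (fun k => Xs (S k) w).

Lemma f_nonneg_bounds y : 0 <= f y <= B.
Proof. destruct (hf y); lra. Qed.

Lemma H_prod_map n : H Sp (prodX n).
Proof.
  apply (H_comp Omega Sp n (fun k => Xs (S k)) (prod_map f n)); [intros; apply hXs; lia |].
  right. apply prod_map_Clip with B L; auto. apply f_nonneg_bounds.
Qed.

Lemma E_f_Xs i : (1 <= i)%nat -> E Sp (fun w => f (Xs i w)) = Finite c.
Proof.
  intros hi. rewrite <- hc. apply hsd; auto.
  exists L, 0%nat. intros. simpl. eapply Rle_trans; [apply hfL |].
  apply Rmult_le_compat_r; [apply Rabs_pos | lra].
Qed.

Lemma c_pos : 0 < c.
Proof.
  assert (hf1 : H Sp (fun w => f (Xs 1%nat w)))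
    by (apply H_comp_lipschitz with L; auto).
  destruct (E_finite_between Sp _ a B hf1 (fun w => hf (Xs 1%nat w))) as [r [hr hab]].
  rewrite E_f_Xs in hr by lia. injection hr as ->. lra.
Qed.

Lemma prod_map_f_nonneg n v : 0 <= prod_map f n v.
Proof. apply (prod_map_bounds f B), f_nonneg_bounds. Qed.

Lemma E_prod_map_vjoin i x :
  E Sp (fun w => prod_map f (i + 1) (vjoin i x (fun _ => Xs (S i) w)))
  = Finite (prod_map f i x * c).
Proof.
  rewrite (functional_extensionality _ (fun w => prod_map f i x * f (Xs (S i) w))
             (fun w => prod_map_vjoin f i x _)).
  assert (hpos : 0 < prod_map f i x) by (apply prod_map_pos with a; auto; apply hf).
  assert (hfX : H Sp (fun w => f (Xs (S i) w)))
    by (apply H_comp_lipschitz with L; auto; apply hXs; lia).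
  rewrite E_poshom, E_f_Xs by (auto || lia). reflexivity.
Qed.

Lemma E_prod_map_succ i : (1 <= i)%nat ->
  E Sp (prodX (S i)) = E Sp (fun w => c * prodX i w).
Proof.
  intros hi. pose proof c_pos.
  assert (hnn : forall w, 0 <= c * prodX i w)
    by (intros; apply Rmult_le_pos; [lra | apply prod_map_f_nonneg]).
  assert (hpsi : (fun w => real (E Sp (fun w0 => prod_map f (i + 1)
                   (vjoin i (fun k => Xs (S k) w) (fun _ => Xs (S i) w0)))))
                 = fun w => c * prodX i w).
  { apply functional_extensionality; intros w.
    rewrite E_prod_map_vjoin. cbn [real]. unfold prodX. ring. }
  pose proof (hind i hi (prod_map f (i + 1))
                (prod_map_Clip f B L _ f_nonneg_bounds hB hL hfL)) as e. cbv zeta in e.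
  replace (prodX (S i)) with
    (fun w => prod_map f (i + 1) (vjoin i (fun k => Xs (S k) w) (fun _ => Xs (S i) w)))
    by (apply functional_extensionality; intros w; apply prod_map_vjoin).
  rewrite e, hpsi; auto.
  - intros x. unfold is_finite.
    replace (fun w => Rabs (prod_map f (i + 1) (vjoin i x (fun _ => Xs (S i) w))))
      with (fun w => prod_map f (i + 1) (vjoin i x (fun _ => Xs (S i) w)))
      by (apply functional_extensionality; intros w; symmetry;
          apply Rabs_pos_eq, prod_map_f_nonneg).
    rewrite E_prod_map_vjoin. reflexivity.
  - assert (habs : (fun w => Rabs (real (E Sp (fun w0 => prod_map f (i + 1)
                      (vjoin i (fun k => Xs (S k) w) (fun _ => Xs (S i) w0))))))
                   = fun w => c * prodX i w).
    { rewrite <- hpsi. apply functional_extensionality; intros w.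
      apply Rabs_pos_eq. rewrite E_prod_map_vjoin. cbn [real].
      apply Rmult_le_pos; [apply prod_map_f_nonneg | lra]. }
    rewrite habs. unfold is_finite.
    destruct (E_finite_between Sp (fun w => c * prodX i w) 0 (c * B ^ i)) as [r [-> _]]; auto.
    + apply H_scal, H_prod_map.
    + intros w. split; auto. apply Rmult_le_compat_l; [lra |].
      apply (prod_map_bounds f B), f_nonneg_bounds.
Qed.

Lemma E_prod_map n : E Sp (prodX n) = Finite (c ^ n).
Proof.
  pose proof c_pos.
  induction n as [| [| n] IH].
  - apply (E_const Omega Sp 1).
  - unfold prodX. simpl. rewrite Rmult_1_r, <- E_f_Xs with 1%nat by lia.
    f_equal. apply functional_extensionality; intros; ring.
  - rewrite E_prod_map_succ, E_poshom, IH by (lia || apply H_prod_map || auto).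
    reflexivity.
Qed.

End ProductFormula.

Section ExpSum.

Variables (g : R -> R) (T K : R).
Hypothesis hT : 0 <= T.
Hypothesis hK : 0 <= K.
Hypothesis hg : forall y, - T <= g y <= T.
Hypothesis hgK : forall y1 y2, Rabs (g y1 - g y2) <= K * Rabs (y1 - y2).

Lemma exp_g_bounds y : exp (- T) <= exp (g y) <= exp T.
Proof. pose proof (hg y). split; apply exp_le_compat; lra. Qed.

Lemma exp_g_lipschitz y1 y2 : Rabs (exp (g y1) - exp (g y2)) <= exp T * K * Rabs (y1 - y2).
Proof. apply exp_comp_lipschitz; auto. intros; apply hg. Qed.

Lemma exp_T_K_nonneg : 0 <= exp T * K.
Proof. pose proof (exp_pos T). nra. Qed.

Lemma exp_sum_eq_prod_map n : (fun w => exp (sum1 (fun i => g (Xs i w)) n))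
  = (fun w => prod_map (fun y => exp (g y)) n (fun k => Xs (S k) w)).
Proof.
  apply functional_extensionality; intros w. symmetry. apply (prod_map_exp g n (fun i => Xs i w)).
Qed.

Lemma H_exp_sum n : H Sp (fun w => exp (sum1 (fun i => g (Xs i w)) n)).
Proof.
  rewrite exp_sum_eq_prod_map.
  apply H_prod_map with (exp (- T)) (exp T) (exp T * K); auto using exp_pos.
  - apply exp_ge_1, hT.
  - apply exp_T_K_nonneg.
  - apply exp_g_bounds.
  - apply exp_g_lipschitz.
Qed.

Lemma E_exp_sum_le b n : E_le Sp (fun w => exp (g (X w))) b ->
  E_le Sp (fun w => exp (sum1 (fun i => g (Xs i w)) n)) (b ^ n).
Proof.
  intros hb.
  pose proof (H_comp_exp Sp X g T K hX hK (fun y => proj2 (hg y)) hgK) as hgX.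
  destruct (E_finite_between Sp _ _ _ hgX (fun w => exp_g_bounds (X w))) as [c [hc [hc0 _]]].
  pose proof (E_le_finite Sp _ _ _ hc hb).
  rewrite exp_sum_eq_prod_map.
  unfold E_le.
  pose proof (E_prod_map (fun y => exp (g y)) (exp (- T)) (exp T) (exp T * K) c (exp_pos _)
                (exp_ge_1 _ hT) exp_T_K_nonneg exp_g_bounds exp_g_lipschitz hc n) as e.
  cbv beta in e. rewrite e. simpl. apply pow_incr. pose proof (exp_pos (- T)). lra.
Qed.

End ExpSum.

End Independence.

(** * Truncated moments and tails *)

Section Truncation.

Context {Omega : Type} (Sp : SLESpace Omega) (X : Omega -> R).
Hypothesis hX : H Sp X.

Lemma H_min_sq s : H Sp (fun w => Rmin (X w ^ 2) (s ^ 2)).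
Proof.
  apply H_comp_growth1 with (phi := fun a => Rmin (a ^ 2) (s ^ 2)) (C := 1); auto.
  intros a b.
  assert (Rabs (Rmin (a ^ 2) (s ^ 2) - Rmin (b ^ 2) (s ^ 2)) <= Rabs (a ^ 2 - b ^ 2))
    by (unfold Rmin, Rabs; repeat destruct Rle_dec; repeat destruct Rcase_abs; lra).
  eapply Rle_trans; [eassumption |].
  replace (a ^ 2 - b ^ 2) with ((a + b) * (a - b)) by ring. rewrite Rabs_mult.
  apply Rmult_le_compat_r; [apply Rabs_pos |]. pose proof (Rabs_triang a b). lra.
Qed.

Lemma H_tail z : H Sp (fun w => Rmax (Rabs (X w) - z) 0).
Proof.
  apply H_comp_lipschitz with (phi := fun a => Rmax (Rabs a - z) 0) (C := 1); auto; [lra |].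
  intros a b. unfold Rmax, Rabs; repeat destruct Rle_dec; repeat destruct Rcase_abs; lra.
Qed.

Lemma H_ramp_div z : 0 < z -> H Sp (fun w => ramp (X w / z)).
Proof.
  intros hz.
  apply H_comp_lipschitz with (phi := fun a => 1 * ramp (a / z)) (C := 1 * 2 / z) in hX.
  - replace (fun w => ramp (X w / z)) with (fun w => 1 * ramp (X w / z))
      by (apply functional_extensionality; intros; ring). exact hX.
  - apply Rlt_le, Rdiv_lt_0_compat; lra.
  - apply scaled_lipschitz; [lra | lra | apply ramp_lipschitz].
Qed.

Lemma E_min_sq s : E Sp (fun w => Rmin (X w ^ 2) (s ^ 2)) = Finite (lfun Sp X s).
Proof.
  destruct (E_finite_between Sp _ 0 (s ^ 2) (H_min_sq s)) as [r [h _]].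
  - intros w. split; [apply Rmin_glb; apply pow2_ge_0 | apply Rmin_r].
  - unfold lfun. rewrite h. reflexivity.
Qed.

Lemma lfun_bounds s : 0 <= lfun Sp X s <= s ^ 2.
Proof.
  destruct (E_finite_between Sp _ 0 (s ^ 2) (H_min_sq s)) as [r [h hr]].
  - intros w. split; [apply Rmin_glb; apply pow2_ge_0 | apply Rmin_r].
  - rewrite E_min_sq in h. injection h as ->. exact hr.
Qed.

Lemma E_le_min_sq s : E_le Sp (fun w => Rmin (X w ^ 2) (s ^ 2)) (lfun Sp X s).
Proof. unfold E_le. rewrite E_min_sq. simpl. lra. Qed.

Lemma lfun_le_of_E_le s a : E_le Sp (fun w => Rmin (X w ^ 2) (s ^ 2)) a -> lfun Sp X s <= a.
Proof. apply E_le_finite, E_min_sq. Qed.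

Lemma lfun_mono s t : 0 <= s <= t -> lfun Sp X s <= lfun Sp X t.
Proof.
  intros hst. apply lfun_le_of_E_le.
  apply E_le_mono with (fun w => Rmin (X w ^ 2) (t ^ 2)); auto using H_min_sq, E_le_min_sq.
  intros w. assert (s ^ 2 <= t ^ 2) by (apply pow_incr; lra).
  unfold Rmin; repeat destruct Rle_dec; lra.
Qed.

Lemma lfun_le_Elow s lo :
  Elow Sp (fun w => Rmin (X w ^ 2) (s ^ 2)) = Finite lo -> lo <= lfun Sp X s.
Proof.
  unfold Elow. intros he.
  destruct (E Sp (fun w => - Rmin (X w ^ 2) (s ^ 2))) as [r | |] eqn:er; try discriminate.
  injection he as <-.
  assert (hH : H Sp (fun w => - Rmin (X w ^ 2) (s ^ 2))).
  { replace (fun w => - Rmin (X w ^ 2) (s ^ 2)) with (fun w => -1 * Rmin (X w ^ 2) (s ^ 2))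
      by (apply functional_extensionality; intros; ring).
    apply H_scal, H_min_sq. }
  pose proof (E_subadd Omega Sp _ _ (H_min_sq s) hH) as hs.
  rewrite E_min_sq, er in hs. specialize (hs I).
  replace (fun w => Rmin (X w ^ 2) (s ^ 2) + - Rmin (X w ^ 2) (s ^ 2)) with (fun _ : Omega => 0)
    in hs by (apply functional_extensionality; intros; ring).
  rewrite E_const in hs. simpl in hs. lra.
Qed.

Lemma E_le_ramp_of_Vcap z eta : 0 < z -> 0 <= eta ->
  Rbar_le (Vcap Sp (fun w => z / 2 <= Rabs (X w)))
          (Finite (eta * (lfun Sp X (z / 2) / (z / 2) ^ 2))) ->
  E_le Sp (fun w => ramp (X w / z)) (4 * eta * lfun Sp X z / z ^ 2).
Proof.
  intros hz he hV. unfold E_le.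
  eapply Rbar_le_trans.
  { apply E_le_Vcap; [apply H_ramp_div; auto | intros; apply ramp_bounds |].
    intros w hw. apply ramp_pos_abs_gt in hw. rewrite Rabs_div_pos in hw by lra.
    apply Rlt_le, Rmult_lt_reg_r with (/ z); [apply Rinv_0_lt_compat; lra |].
    replace (z / 2 * / z) with (1 / 2) by (field; lra). exact hw. }
  eapply Rbar_le_trans; [apply hV |]. cbn [Rbar_le].
  pose proof (lfun_mono (z / 2) z ltac:(lra)).
  replace (eta * (lfun Sp X (z / 2) / (z / 2) ^ 2)) with (4 * eta * lfun Sp X (z / 2) / z ^ 2)
    by (field; lra).
  unfold Rdiv. apply Rmult_le_compat_r; [apply Rlt_le, Rinv_0_lt_compat, pow_lt; lra |].
  apply Rmult_le_compat_l; lra.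
Qed.

Lemma E_le_tail_step z rho tau : 0 < z ->
  E_le Sp (fun w => ramp (X w / z)) rho ->
  E_le Sp (fun w => Rmax (Rabs (X w) - 2 * z) 0) tau ->
  E_le Sp (fun w => Rmax (Rabs (X w) - z) 0) (z * rho + tau).
Proof.
  intros hz hr ht.
  apply E_le_mono with (fun w => z * ramp (X w / z) + Rmax (Rabs (X w) - 2 * z) 0).
  - apply H_tail; auto.
  - apply H_add; [apply H_scal, H_ramp_div |apply H_tail]; auto.
  - intros w.
    pose proof (ramp_bounds (X w / z)). pose proof (Rmax_r (Rabs (X w) - 2 * z) 0).
    destruct (Rle_dec (Rabs (X w)) z).
    + assert (Rmax (Rabs (X w) - z) 0 = 0) by (unfold Rmax; destruct Rle_dec; lra). nra.
    + rewrite ramp_eq_1.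
      * unfold Rmax; repeat destruct Rle_dec; lra.
      * rewrite Rabs_div_pos by lra. apply Rmult_le_reg_r with z; auto.
        field_simplify; lra.
  - apply E_le_add; [apply H_scal, H_ramp_div | apply H_tail | apply E_le_scal, hr | exact ht];
      auto using H_ramp_div.
Qed.

Lemma lfun_double_le z rho : 0 < z -> E_le Sp (fun w => ramp (X w / z)) rho ->
  lfun Sp X (2 * z) <= lfun Sp X z + 3 * z ^ 2 * rho.
Proof.
  intros hz hr. assert (0 < 3 * z ^ 2) by (pose proof (pow_lt z 2 hz); lra).
  apply lfun_le_of_E_le; auto.
  apply E_le_mono with (fun w => Rmin (X w ^ 2) (z ^ 2) + 3 * z ^ 2 * ramp (X w / z)).
  - apply H_min_sq; auto.
  - apply H_add; [apply H_min_sq | apply H_scal, H_ramp_div]; auto.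
  - intros w. set (v := X w). pose proof (ramp_bounds (v / z)).
    destruct (Rle_dec (Rabs v) z).
    + assert (v ^ 2 <= z ^ 2).
      { rewrite <- (pow2_abs v). apply pow_incr. split; auto. apply Rabs_pos. }
      assert (v ^ 2 <= (2 * z) ^ 2) by nra.
      unfold Rmin at 1 2. repeat destruct Rle_dec; nra.
    + rewrite ramp_eq_1.
      * assert (z ^ 2 <= v ^ 2) by (rewrite <- (pow2_abs v); apply pow_incr; lra).
        unfold Rmin; repeat destruct Rle_dec; nra.
      * rewrite Rabs_div_pos by lra. apply Rmult_le_reg_r with z; auto. field_simplify; lra.
  - apply E_le_add; [apply H_min_sq | apply H_scal, H_ramp_div | apply E_le_min_sq |
      apply E_le_scal, hr]; auto using H_ramp_div.
Qed.

Section Dyadic.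

Variables (eta M : R).
Hypothesis heta : 0 < eta <= 1/24.
Hypothesis hI : forall y, M <= y ->
  Rbar_le (Vcap Sp (fun w => y <= Rabs (X w))) (Finite (eta * (lfun Sp X y / y ^ 2))).

Lemma E_le_ramp z : 0 < z -> M <= z / 2 ->
  E_le Sp (fun w => ramp (X w / z)) (4 * eta * lfun Sp X z / z ^ 2).
Proof. intros hz hM. apply E_le_ramp_of_Vcap; [auto | lra | apply hI; lra]. Qed.

(* One dyadic step costs 4 eta l(z)/z, while l(2z)/(2z) <= (3/4) l(z)/z when eta is small,
   so the geometric series of costs is bounded by 16 eta l(z)/z. *)
Lemma E_le_tail_dyadic K z tau : 0 < z -> M <= z / 2 ->
  E_le Sp (fun w => Rmax (Rabs (X w) - 2 ^ K * z) 0) tau ->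
  E_le Sp (fun w => Rmax (Rabs (X w) - z) 0) (16 * eta * lfun Sp X z / z + tau).
Proof.
  revert z tau. induction K as [| K IH]; intros z tau hz hM ht.
  - simpl in ht. rewrite Rmult_1_l in ht. apply E_le_weaken with tau; auto.
    pose proof (lfun_bounds z).
    assert (0 <= 16 * eta * lfun Sp X z / z)
      by (apply Rdiv_le_0_compat; try apply Rmult_le_pos; lra).
    lra.
  - replace (2 ^ S K * z) with (2 ^ K * (2 * z)) in ht by (simpl; ring).
    apply IH in ht; [| lra | lra].
    pose proof (E_le_ramp z hz hM) as hr.
    pose proof (lfun_double_le z _ hz hr) as hd.
    apply E_le_weaken with (1 := E_le_tail_step z _ _ hz hr ht).
    pose proof (lfun_bounds z).
    set (l1 := lfun Sp X z) in *. set (l2 := lfun Sp X (2 * z)) in *.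
    replace (3 * z ^ 2 * (4 * eta * l1 / z ^ 2)) with (12 * eta * l1) in hd by (field; lra).
    assert (16 * eta * l2 / (2 * z) <= 12 * eta * l1 / z).
    { apply Rmult_le_reg_r with (2 * z); [lra |].
      replace (16 * eta * l2 / (2 * z) * (2 * z)) with (16 * eta * l2) by (field; lra).
      replace (12 * eta * l1 / z * (2 * z)) with (24 * eta * l1) by (field; lra).
      assert (eta * l2 <= eta * (l1 + 12 * eta * l1)) by (apply Rmult_le_compat_l; lra).
      assert (eta * eta * l1 <= eta * (1/24) * l1)
        by (apply Rmult_le_compat_r; [lra |]; apply Rmult_le_compat_l; lra).
      nra. }
    replace (z * (4 * eta * l1 / z ^ 2)) with (4 * eta * l1 / z) by (field; lra).
    replace (16 * eta * l1 / z) with (4 * eta * l1 / z + 12 * eta * l1 / z) by (field; lra).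
    lra.
Qed.

Hypothesis hIII : forall eps, 0 < eps -> exists M, forall c, M <= c ->
  Rbar_le (E Sp (fun w => Rmax (Rabs (X w) - c) 0)) (Finite eps).

Lemma E_le_tail z : 0 < z -> M <= z / 2 -> 0 < lfun Sp X z ->
  E_le Sp (fun w => Rmax (Rabs (X w) - z) 0) (17 * eta * lfun Sp X z / z).
Proof.
  intros hz hM hl.
  assert (hep : 0 < eta * lfun Sp X z / z)
    by (apply Rdiv_lt_0_compat; auto; apply Rmult_lt_0_compat; lra).
  destruct (hIII _ hep) as [M3 hM3].
  destruct (exists_pow2_mul_ge M3 z hz) as [K hK].
  eapply E_le_weaken; [apply (E_le_tail_dyadic K z _ hz hM (hM3 _ hK)) |].
  right. field. lra.
Qed.

End Dyadic.

Lemma H_exp_ramp_div s z : 0 < z -> 0 < s -> H Sp (fun w => exp (s * ramp (X w / z))).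
Proof.
  intros hz hs.
  apply (H_comp_exp Sp X (fun a => s * ramp (a / z)) s (s * 2 / z)); auto.
  - apply Rlt_le, Rdiv_lt_0_compat; lra.
  - intros a. pose proof (ramp_bounds (a / z)). nra.
  - apply scaled_lipschitz; [lra | lra | apply ramp_lipschitz].
Qed.

Lemma H_exp_clip_div t z : 0 < z -> 0 < t -> H Sp (fun w => exp (t * clip (X w / z))).
Proof.
  intros hz ht.
  apply (H_comp_exp Sp X (fun a => t * clip (a / z)) t (t * 1 / z)); auto.
  - apply Rlt_le, Rdiv_lt_0_compat; lra.
  - intros a. pose proof (clip_bounds (a / z)). nra.
  - apply scaled_lipschitz; [lra | lra | intros; rewrite Rmult_1_l; apply clip_lipschitz].
Qed.

Lemma E_le_exp_ramp z s V : 0 < z -> 0 < s ->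
  E_le Sp (fun w => ramp (X w / z)) V ->
  E_le Sp (fun w => exp (s * ramp (X w / z))) (1 + s * exp s * V).
Proof.
  intros hz hs hV. pose proof (exp_pos s).
  apply E_le_mono with (fun w => 1 + s * exp s * ramp (X w / z)).
  - apply H_exp_ramp_div; auto.
  - apply H_add; [apply H_const | apply H_scal, H_ramp_div]; auto.
  - intros w. apply exp_le_affine; [lra | apply ramp_bounds].
  - apply E_le_add; [apply H_const | apply H_scal, H_ramp_div | apply E_le_const |
      apply E_le_scal]; auto using H_ramp_div. nra.
Qed.

(* Centering is used here: the linear term of exp at 0 has zero upper expectation. *)
Lemma E_le_exp_clip z t T : E Sp X = Finite 0 -> 0 < z -> 0 < t ->
  E_le Sp (fun w => Rmax (Rabs (X w) - z) 0) T ->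
  E_le Sp (fun w => exp (t * clip (X w / z)))
    (1 + t / z * T + exp t * t ^ 2 / z ^ 2 * lfun Sp X z).
Proof.
  intros hE hz ht hT.
  assert (hz2 : 0 < z ^ 2) by (apply pow_lt; lra).
  assert (hc : 0 < exp t * t ^ 2 / z ^ 2)
    by (apply Rdiv_lt_0_compat; auto; apply Rmult_lt_0_compat; [apply exp_pos | apply pow_lt; lra]).
  assert (htz : 0 < t / z) by (apply Rdiv_lt_0_compat; lra).
  assert (hH : H Sp (fun w => 1 + t / z * X w + t / z * Rmax (Rabs (X w) - z) 0))
    by (repeat apply H_add; try apply H_scal; auto using H_const, H_tail).
  apply E_le_mono with (fun w => (1 + t / z * X w + t / z * Rmax (Rabs (X w) - z) 0)
                                 + exp t * t ^ 2 / z ^ 2 * Rmin (X w ^ 2) (z ^ 2)).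
  - apply H_exp_clip_div; auto.
  - apply H_add; [| apply H_scal, H_min_sq]; auto.
  - intros w. set (v := X w). pose proof (clip_bounds (v / z)).
    eapply Rle_trans; [apply exp_le_quadratic with (t := t); nra |].
    pose proof (clip_le_tail (v / z)) as q1. rewrite tail_div in q1 by lra.
    pose proof (clip_sq_le (v / z)) as q2. rewrite min_sq_div in q2 by lra.
    assert (t * clip (v / z) <= t / z * v + t / z * Rmax (Rabs v - z) 0).
    { replace (t / z * v + t / z * Rmax (Rabs v - z) 0)
        with (t * (v / z + Rmax (Rabs v - z) 0 / z)) by (field; lra).
      apply Rmult_le_compat_l; lra. }
    assert (exp t * (t * clip (v / z)) ^ 2
            <= exp t * t ^ 2 / z ^ 2 * Rmin (v ^ 2) (z ^ 2)).
    { replace (exp t * t ^ 2 / z ^ 2 * Rmin (v ^ 2) (z ^ 2))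
        with (exp t * t ^ 2 * (Rmin (v ^ 2) (z ^ 2) / z ^ 2)) by (field; lra).
      rewrite Rpow_mult_distr, <- Rmult_assoc. apply Rmult_le_compat_l; auto.
      apply Rmult_le_pos; [pose proof (exp_pos t); lra | apply pow2_ge_0]. }
    lra.
  - apply E_le_add; [exact hH | apply H_scal, H_min_sq; auto | |
      apply E_le_scal; auto using H_min_sq, E_le_min_sq].
    replace (1 + t / z * T) with (1 + t / z * 0 + t / z * T) by ring.
    apply E_le_add; [apply H_add; auto using H_const, H_scal | apply H_scal, H_tail; auto | |
      apply E_le_scal; auto using H_tail].
    apply E_le_add; auto using H_const, H_scal, E_le_const.
    apply E_le_scal; auto. unfold E_le. rewrite hE. simpl. lra.
Qed.

Lemma lfun_le_linear :
  (forall eps, 0 < eps -> exists M, forall c, M <= c ->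
     Rbar_le (E Sp (fun w => Rmax (Rabs (X w) - c) 0)) (Finite eps)) ->
  exists A, 0 < A /\ forall s, 0 <= s -> lfun Sp X s <= s * A.
Proof.
  intros hIII. destruct (hIII 1 ltac:(lra)) as [M1 hM1].
  pose proof (Rmax_l M1 0). pose proof (Rmax_r M1 0). set (c1 := Rmax M1 0) in *.
  exists (1 + c1). split; [lra |]. intros s [hs | <-].
  - apply lfun_le_of_E_le; auto.
    apply E_le_mono with (fun w => s * Rmax (Rabs (X w) - c1) 0 + s * c1).
    + apply H_min_sq; auto.
    + apply H_add; [apply H_scal, H_tail | apply H_const]; auto.
    + intros w. set (v := X w).
      assert (Rmin (v ^ 2) (s ^ 2) <= s * Rabs v).
      { rewrite <- (pow2_abs v). pose proof (Rabs_pos v).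
        unfold Rmin; destruct Rle_dec; simpl in *; nra. }
      assert (Rabs v <= Rmax (Rabs v - c1) 0 + c1) by (unfold Rmax; destruct Rle_dec; lra).
      nra.
    + replace (s * (1 + c1)) with (s * 1 + s * c1) by ring.
      apply E_le_add; [apply H_scal, H_tail | apply H_const | apply E_le_scal |
        apply E_le_const]; auto using H_tail.
      apply hM1. lra.
  - pose proof (lfun_bounds 0). simpl in *. lra.
Qed.

End Truncation.

(** * The truncation level z_n *)

Lemma Glb_Rbar_finite (P : R -> Prop) m s0 : (forall s, P s -> m <= s) -> P s0 ->
  exists g, Glb_Rbar P = Finite g /\ m <= g /\ (forall s, P s -> g <= s) /\
            (forall y, g < y -> exists s, P s /\ s < y).
Proof.
  intros hm hs0. destruct (Glb_Rbar_correct P) as [hlb hglb].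
  assert (h1 : Rbar_le (Finite m) (Glb_Rbar P)) by (apply hglb; intros x hx; simpl; auto).
  assert (h2 : Rbar_le (Glb_Rbar P) (Finite s0)) by (apply hlb; auto).
  destruct (Glb_Rbar P) as [g | |]; simpl in h1, h2; try contradiction.
  exists g. split; [reflexivity | split; [exact h1 | split; [exact hlb |]]].
  intros y hy. apply NNPP. intros h.
  assert (hyg : Rbar_le (Finite y) (Finite g)).
  { apply hglb. intros x hx. simpl. destruct (Rle_lt_dec y x); auto.
    exfalso; apply h; eauto. }
  simpl in hyg. lra.
Qed.

Lemma le_half_of_sq_ge M z : 0 < z -> 4 * M ^ 2 + 1 <= z ^ 2 -> M <= z / 2.
Proof.
  intros hz h. destruct (Rle_lt_dec M (z / 2)) as [| hlt]; auto.
  assert (z / 2 * (z / 2) < M * M) by (apply Rmult_le_0_lt_compat; lra). simpl in h. lra.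
Qed.

Section QuadraticCrossing.

Variables (L : R -> R) (b q g : R).
Hypothesis hq : 0 < q.
Hypothesis hb : 0 < b.
Hypothesis hmono : forall s t, b <= s <= t -> L s <= L t.
Hypothesis hL : forall s, 0 <= L s.
Hypothesis hLb : q * b ^ 2 < L b.
Hypothesis hgb : b <= g.
Hypothesis hglb : forall s, b <= s -> L s <= q * s ^ 2 -> g <= s.
Hypothesis happrox : forall y, g < y -> exists s, (b <= s /\ L s <= q * s ^ 2) /\ s < y.

Let root := sqrt (L g / q).

Lemma root_sq : root * root = L g / q.
Proof. apply sqrt_sqrt, Rdiv_le_0_compat; auto. Qed.

Lemma root_nonneg : 0 <= root.
Proof. apply sqrt_pos. Qed.

Lemma crossing_ge : q * g ^ 2 <= L g.
Proof.
  destruct (Rle_lt_dec (q * g ^ 2) (L g)) as [| hlt]; auto. exfalso.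
  assert (hbg : b < g).
  { destruct (Rle_lt_or_eq_dec b g hgb) as [| e]; auto. rewrite <- e in hlt. lra. }
  pose proof root_nonneg. pose proof root_sq.
  assert (hrg : root < g).
  { destruct (Rlt_le_dec root g); auto.
    assert (L g = q * (root * root)) by (rewrite root_sq; field; lra).
    assert (g * g <= root * root) by nra. simpl in hlt. nra. }
  set (s := (g + Rmax b root) / 2).
  pose proof (Rmax_l b root). pose proof (Rmax_r b root).
  assert (Rmax b root < g) by (unfold Rmax; destruct Rle_dec; lra).
  assert (L s <= L g) by (apply hmono; unfold s; lra).
  assert (L g = q * (root * root)) by (rewrite root_sq; field; lra).
  assert (root * root < s * s) by (unfold s; nra).
  assert (g <= s) by (apply hglb; [unfold s; lra | simpl; nra]).
  unfold s in *. lra.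
Qed.

Lemma crossing_le : L g <= q * g ^ 2.
Proof.
  destruct (Rle_lt_dec (L g) (q * g ^ 2)) as [| hgt]; auto. exfalso.
  pose proof root_nonneg. pose proof root_sq.
  assert (hgr : g < root).
  { destruct (Rlt_le_dec g root); auto.
    assert (L g = q * (root * root)) by (rewrite root_sq; field; lra).
    assert (root * root <= g * g) by nra. simpl in hgt. nra. }
  destruct (happrox root hgr) as [s [[hs1 hs2] hs3]].
  assert (g <= s) by (apply hglb; auto).
  assert (L g <= L s) by (apply hmono; lra).
  assert (L g = q * (root * root)) by (rewrite root_sq; field; lra).
  assert (s * s < root * root) by nra.
  simpl in hs2. nra.
Qed.

End QuadraticCrossing.

Section Levels.

Context {Omega : Type} (Sp : SLESpace Omega) (X : Omega -> R).
Hypothesis hX : H Sp X.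

Lemma b0_facts : (exists K M, forall y, M <= y ->
     exists lo, Elow Sp (fun w => Rmin (X w ^ 2) (y ^ 2)) = Finite lo /\ 0 < lo /\
       lfun Sp X y / lo <= K) ->
  0 <= b0 Sp X /\ 0 < lfun Sp X (b0 Sp X + 1).
Proof.
  intros [K [M hII]].
  destruct (hII (Rmax M 0) (Rmax_l _ _)) as [lo [h1 [h2 _]]].
  pose proof (lfun_le_Elow Sp X hX _ lo h1).
  destruct (Glb_Rbar_finite (fun x => 0 <= x /\ 0 < lfun Sp X x) 0 (Rmax M 0))
    as [g [eg [hg1 [_ hg3]]]].
  - intros s [hs _]; auto.
  - split; [apply Rmax_r | lra].
  - unfold b0. rewrite eg. simpl. split; auto.
    destruct (hg3 (g + 1) ltac:(lra)) as [s [[hs1 hs2] hs3]].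
    pose proof (lfun_mono Sp X hX s (g + 1) ltac:(lra)). lra.
Qed.

(* l(s)/s^2 crosses the level q at z_n: it exceeds q at b0 + 1 and l grows at most linearly. *)
Lemma lfun_zn (xn : R) (n : nat) A : 0 < xn ^ 2 / INR n -> 0 < A ->
  0 <= b0 Sp X -> xn ^ 2 / INR n * (b0 Sp X + 1) ^ 2 < lfun Sp X (b0 Sp X + 1) ->
  (forall s, 0 <= s -> lfun Sp X s <= s * A) ->
  b0 Sp X + 1 <= zn Sp X xn n /\
  lfun Sp X (zn Sp X xn n) = xn ^ 2 / INR n * zn Sp X xn n ^ 2.
Proof.
  set (q := xn ^ 2 / INR n). set (b := b0 Sp X + 1).
  intros hq hA hb0 hbq hlin.
  assert (div_sq_le_iff :
    forall s, 0 < s -> (lfun Sp X s / s ^ 2 <= q <-> lfun Sp X s <= q * s ^ 2)).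
  { intros s hs. assert (0 < s ^ 2) by (apply pow_lt; lra). split; intros h.
    - apply Rmult_le_reg_r with (/ s ^ 2); [apply Rinv_0_lt_compat; auto |].
      replace (q * s ^ 2 * / s ^ 2) with q by (field; lra). auto.
    - apply Rmult_le_reg_r with (s ^ 2); auto.
      replace (lfun Sp X s / s ^ 2 * s ^ 2) with (lfun Sp X s) by (field; lra). auto. }
  set (P := fun s => b <= s /\ lfun Sp X s <= q * s ^ 2).
  assert (hzn : zn Sp X xn n = real (Glb_Rbar P)).
  { unfold zn. f_equal. apply Glb_Rbar_eqset. intros s. unfold P.
    split; intros [h1 h2]; split; auto; apply div_sq_le_iff; auto; unfold b in *; lra. }
  pose proof (Rmax_l b (A / q)). pose proof (Rmax_r b (A / q)).
  set (s0 := Rmax b (A / q)) in *.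
  assert (hs0 : P s0).
  { split; auto. pose proof (hlin s0 ltac:(unfold b in *; lra)).
    assert (A <= q * s0).
    { apply Rmult_le_reg_r with (/ q); [apply Rinv_0_lt_compat; auto |].
      replace (q * s0 * / q) with s0 by (field; lra). unfold Rdiv in *; lra. }
    assert (s0 * A <= s0 * (q * s0)) by (apply Rmult_le_compat_l; unfold b in *; lra).
    simpl; nra. }
  destruct (Glb_Rbar_finite P b s0 (fun s hs => proj1 hs) hs0) as [g [eg [hg1 [hg2 hg3]]]].
  rewrite hzn, eg. simpl. split; auto.
  assert (hbpos : 0 < b) by (unfold b; lra).
  assert (hmono : forall s t, b <= s <= t -> lfun Sp X s <= lfun Sp X t)
    by (intros s t hst; apply lfun_mono; auto; lra).
  assert (hnn : forall s, 0 <= lfun Sp X s) by (intros s; apply lfun_bounds; auto).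
  assert (hglb : forall s, b <= s -> lfun Sp X s <= q * s ^ 2 -> g <= s)
    by (intros s hs1 hs2; apply hg2; split; auto).
  apply Rle_antisym.
  - exact (crossing_le (lfun Sp X) b q g hq hbpos hmono hnn hg1 hglb hg3).
  - exact (crossing_ge (lfun Sp X) b q g hq hbpos hmono hnn hbq hg1 hglb).
Qed.

Lemma zn_level M :
  (exists K M, forall y, M <= y ->
     exists lo, Elow Sp (fun w => Rmin (X w ^ 2) (y ^ 2)) = Finite lo /\ 0 < lo /\
       lfun Sp X y / lo <= K) ->
  (forall eps, 0 < eps -> exists M, forall c, M <= c ->
     Rbar_le (E Sp (fun w => Rmax (Rabs (X w) - c) 0)) (Finite eps)) ->
  exists qmax, 0 < qmax /\ forall xn n, 0 < xn ^ 2 / INR n <= qmax ->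
    let z := zn Sp X xn n in
    0 < z /\ M <= z / 2 /\ lfun Sp X z = xn ^ 2 / INR n * z ^ 2 /\ 0 < lfun Sp X z.
Proof.
  intros hII hIII.
  destruct (b0_facts hII) as [hb0 hl0].
  destruct (lfun_le_linear Sp X hX hIII) as [A [hA hlin]].
  set (b := b0 Sp X + 1) in *. set (l0 := lfun Sp X b) in *.
  assert (hbpos : 0 < b) by (unfold b; lra).
  assert (hb2 : 0 < b ^ 2) by (apply pow_lt; lra).
  assert (hM2 : 0 < 4 * M ^ 2 + 1) by (pose proof (pow2_ge_0 M); lra).
  exists (Rmin (l0 / (2 * b ^ 2)) (l0 / (4 * M ^ 2 + 1))).
  split; [apply Rmin_glb_lt; apply Rdiv_lt_0_compat; lra |].
  intros xn n [hq hqmax] z. set (q := xn ^ 2 / INR n) in *.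
  pose proof (Rle_trans _ _ _ hqmax (Rmin_l _ _)) as hq1.
  pose proof (Rle_trans _ _ _ hqmax (Rmin_r _ _)) as hq2.
  assert (hqb : q * b ^ 2 < l0).
  { apply Rmult_le_compat_r with (r := b ^ 2) in hq1; [| lra].
    replace (l0 / (2 * b ^ 2) * b ^ 2) with (l0 / 2) in hq1 by (field; lra). lra. }
  destruct (lfun_zn xn n A hq hA hb0 hqb hlin) as [hzb hlz]. fold b z q in hzb, hlz.
  assert (l0 <= lfun Sp X z) by (apply lfun_mono; auto; lra).
  assert (q * (4 * M ^ 2 + 1) <= l0).
  { apply Rmult_le_compat_r with (r := 4 * M ^ 2 + 1) in hq2; [| lra].
    replace (l0 / (4 * M ^ 2 + 1) * (4 * M ^ 2 + 1)) with l0 in hq2 by (field; lra). lra. }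
  split; [lra | split; [| split; [exact hlz | lra]]].
  apply le_half_of_sq_ge; [lra |]. apply Rmult_le_reg_l with q; auto. nra.
Qed.

End Levels.

(** * Exponential bounds *)

Section Chernoff.

Context {Omega : Type} (Sp : SLESpace Omega) (X : Omega -> R) (Xs : nat -> Omega -> R).
Hypothesis hX : H Sp X.
Hypothesis hXs : forall n, (1 <= n)%nat -> H Sp (Xs n).
Hypothesis hind : indep_seq Sp Xs.
Hypothesis hsd : forall n, (1 <= n)%nat -> same_dist Sp (Xs n) X.

Variables (z s t : R).
Hypothesis hz : 0 < z.
Hypothesis hs : 0 < s.
Hypothesis ht : 0 < t.

Lemma scaled_ramp_bounds y : - s <= s * ramp (y / z) <= s.
Proof. pose proof (ramp_bounds (y / z)). split; nra. Qed.

Lemma scaled_clip_bounds y : - t <= t * clip (y / z) <= t.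
Proof. pose proof (clip_bounds (y / z)). split; nra. Qed.

Lemma scaled_ramp_lipschitz a b :
  Rabs (s * ramp (a / z) - s * ramp (b / z)) <= s * 2 / z * Rabs (a - b).
Proof. apply scaled_lipschitz; [lra | lra | apply ramp_lipschitz]. Qed.

Lemma scaled_clip_lipschitz a b :
  Rabs (t * clip (a / z) - t * clip (b / z)) <= t * 1 / z * Rabs (a - b).
Proof.
  apply scaled_lipschitz; [lra | lra |]. intros; rewrite Rmult_1_l; apply clip_lipschitz.
Qed.

Lemma Vcap_self_normalized_le (A : Omega -> Prop) n x a1 a2 : 0 < x ->
  (forall w, A w ->
     sum1 (fun i => Xs i w) n >= x * sqrt (sum1 (fun i => Xs i w ^ 2) n) /\
     sum1 (fun i => Xs i w ^ 2) n >= 9 * x ^ 2 * z ^ 2) ->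
  E_le Sp (fun w => exp (s * ramp (X w / z))) a1 ->
  E_le Sp (fun w => exp (t * clip (X w / z))) a2 ->
  Rbar_le (Vcap Sp A) (Finite (exp (- (s * (/ 10000 * x ^ 2))) * a1 ^ n
                               + exp (- (t * (29699 / 10000 * x ^ 2))) * a2 ^ n)).
Proof.
  intros hx hA h1 h2.
  set (T1 := s * (/ 10000 * x ^ 2)). set (T2 := t * (29699 / 10000 * x ^ 2)).
  set (P1 := fun w => exp (sum1 (fun i => s * ramp (Xs i w / z)) n)).
  set (P2 := fun w => exp (sum1 (fun i => t * clip (Xs i w / z)) n)).
  assert (hK1 : 0 <= s * 2 / z) by (apply Rlt_le, Rdiv_lt_0_compat; lra).
  assert (hK2 : 0 <= t * 1 / z) by (apply Rlt_le, Rdiv_lt_0_compat; lra).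
  pose proof (H_exp_sum Sp Xs hXs _ s _ (Rlt_le _ _ hs) hK1 scaled_ramp_bounds
                scaled_ramp_lipschitz n) as hP1.
  pose proof (H_exp_sum Sp Xs hXs _ t _ (Rlt_le _ _ ht) hK2 scaled_clip_bounds
                scaled_clip_lipschitz n) as hP2.
  pose proof (exp_pos (- T1)). pose proof (exp_pos (- T2)).
  apply Vcap_le with (fun w => exp (- T1) * P1 w + exp (- T2) * P2 w).
  - apply H_add; apply H_scal; auto.
  - intros w. pose proof (exp_pos (sum1 (fun i => s * ramp (Xs i w / z)) n)).
    pose proof (exp_pos (sum1 (fun i => t * clip (Xs i w / z)) n)).
    split; [unfold P1, P2; nra |]. intros hw. destruct (hA w hw) as [e1 e2].
    unfold P1, P2. rewrite !sum1_scal. apply exp_chebyshev_dichotomy; lra.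
  - apply E_le_add; try (apply H_scal; auto); apply E_le_scal; auto.
    + exact (E_exp_sum_le Sp X Xs hXs hind hsd hX _ s _ (Rlt_le _ _ hs) hK1
               scaled_ramp_bounds scaled_ramp_lipschitz a1 n h1).
    + exact (E_exp_sum_le Sp X Xs hXs hind hsd hX _ t _ (Rlt_le _ _ ht) hK2
               scaled_clip_bounds scaled_clip_lipschitz a2 n h2).
Qed.

End Chernoff.

Lemma sq_div_le_of_abs_le x n c : 0 < INR n -> 0 <= c ->
  Rabs x <= sqrt c * sqrt (INR n) -> x ^ 2 / INR n <= c.
Proof.
  intros hn hc hx. apply Rmult_le_reg_r with (INR n); auto.
  replace (x ^ 2 / INR n * INR n) with (x ^ 2) by (field; lra).
  rewrite <- (pow2_abs x), <- (pow2_sqrt c hc), <- (pow2_sqrt (INR n)) by lra.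
  rewrite <- Rpow_mult_distr. apply pow_incr. split; auto. apply Rabs_pos.
Qed.

Lemma two_exp_le Y q n K : 100 <= Y -> INR n * q = Y -> 0 <= q -> 0 <= K <= 17 / 2000 + 7 / 16 ->
  exp (- (12000 * (/ 10000 * Y))) * (1 + q * (1 / 10)) ^ n
  + exp (- (1 / 2 * (29699 / 10000 * Y))) * (1 + q * K) ^ n <= exp (- Y).
Proof.
  intros hY hnq hq hK.
  pose proof (pow_le_exp_mul (1 + q * (1 / 10)) (q * (1 / 10)) n ltac:(nra) ltac:(lra)) as g1.
  pose proof (pow_le_exp_mul (1 + q * K) (q * K) n ltac:(nra) ltac:(lra)) as g2.
  replace (INR n * (q * (1 / 10))) with (Y / 10) in g1 by (subst Y; field).
  replace (INR n * (q * K)) with (Y * K) in g2 by (subst Y; ring).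
  assert (t1 : exp (- (12000 * (/ 10000 * Y))) * (1 + q * (1 / 10)) ^ n
               <= exp (- (103 / 100) * Y)).
  { eapply Rle_trans; [apply Rmult_le_compat_l; [apply Rlt_le, exp_pos | apply g1] |].
    rewrite <- exp_plus. apply exp_le_compat. lra. }
  assert (t2 : exp (- (1 / 2 * (29699 / 10000 * Y))) * (1 + q * K) ^ n
               <= exp (- (103 / 100) * Y)).
  { eapply Rle_trans; [apply Rmult_le_compat_l; [apply Rlt_le, exp_pos | apply g2] |].
    rewrite <- exp_plus. apply exp_le_compat.
    assert (Y * K <= Y * (17 / 2000 + 7 / 16)) by (apply Rmult_le_compat_l; lra). lra. }
  assert (exp (- (103 / 100) * Y) = exp (- Y) * exp (- (3 / 100 * Y)))
    by (rewrite <- exp_plus; f_equal; lra).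
  assert (exp (- (3 / 100 * Y)) <= 1 / 2).
  { pose proof (exp_ineq1_le (3 / 100 * Y)). pose proof (exp_pos (3 / 100 * Y)).
    assert (exp (- (3 / 100 * Y)) * exp (3 / 100 * Y) = 1)
      by (rewrite <- exp_plus, <- exp_0; f_equal; lra).
    nra. }
  pose proof (exp_pos (- Y)). nra.
Qed.

Section MomentsAtLevel.

Context {Omega : Type} (Sp : SLESpace Omega) (X : Omega -> R).
Hypothesis hX : H Sp X.
Hypothesis hE0 : E Sp X = Finite 0.
Variables (eta M : R).
Hypothesis heta : 0 < eta <= 1/24.
Hypothesis hI : forall y, M <= y ->
  Rbar_le (Vcap Sp (fun w => y <= Rabs (X w))) (Finite (eta * (lfun Sp X y / y ^ 2))).
Hypothesis hIII : forall eps, 0 < eps -> exists M, forall c, M <= c ->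
  Rbar_le (E Sp (fun w => Rmax (Rabs (X w) - c) 0)) (Finite eps).

Variables (z q : R).
Hypothesis hz : 0 < z.
Hypothesis hMz : M <= z / 2.
Hypothesis hlz : lfun Sp X z = q * z ^ 2.
Hypothesis hlpos : 0 < lfun Sp X z.

Lemma E_le_exp_ramp_level s : 0 < s ->
  E_le Sp (fun w => exp (s * ramp (X w / z))) (1 + q * (4 * s * exp s * eta)).
Proof.
  intros hs. eapply E_le_weaken.
  - apply E_le_exp_ramp, (E_le_ramp Sp X hX eta M heta hI); auto.
  - rewrite hlz. right. field. lra.
Qed.

Lemma E_le_exp_clip_level t : 0 < t ->
  E_le Sp (fun w => exp (t * clip (X w / z))) (1 + q * (17 * eta * t + exp t * t ^ 2)).
Proof.
  intros ht. eapply E_le_weaken.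
  - apply E_le_exp_clip, (E_le_tail Sp X hX eta M heta hI hIII); auto.
  - rewrite hlz. right. field. lra.
Qed.

End MomentsAtLevel.

Definition eta0 : R := / (40 * 12000 * exp 12000).

Lemma eta0_bounds : 0 < eta0 <= 1 / 1000.
Proof.
  pose proof (exp_ge_1 12000 ltac:(lra)). unfold eta0. split.
  - apply Rinv_0_lt_compat. lra.
  - replace (1 / 1000) with (/ 1000) by field. apply Rinv_le_contravar; lra.
Qed.

Lemma ramp_constant_eq : 4 * 12000 * exp 12000 * eta0 = 1 / 10.
Proof. unfold eta0. field. pose proof (exp_pos 12000). lra. Qed.

Lemma clip_constant_bounds :
  0 <= 17 * eta0 * (1 / 2) + exp (1 / 2) * (1 / 2) ^ 2 <= 17 / 2000 + 7 / 16.
Proof. pose proof eta0_bounds. pose proof exp_half_le. pose proof (exp_pos (1 / 2)). nra. Qed.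

Section Conclusion.

Context {Omega : Type} (Sp : SLESpace Omega) (X : Omega -> R) (Xs : nat -> Omega -> R).
Hypothesis hX : H Sp X.
Hypothesis hXs : forall n, (1 <= n)%nat -> H Sp (Xs n).
Hypothesis hind : indep_seq Sp Xs.
Hypothesis hsd : forall n, (1 <= n)%nat -> same_dist Sp (Xs n) X.
Hypothesis hE0 : E Sp X = Finite 0.
Variable M : R.
Hypothesis hI : forall y, M <= y ->
  Rbar_le (Vcap Sp (fun w => y <= Rabs (X w))) (Finite (eta0 * (lfun Sp X y / y ^ 2))).
Hypothesis hIII : forall eps, 0 < eps -> exists M, forall c, M <= c ->
  Rbar_le (E Sp (fun w => Rmax (Rabs (X w) - c) 0)) (Finite eps).

Lemma Vcap_level_le z q n xn : 0 < z -> M <= z / 2 -> lfun Sp X z = q * z ^ 2 ->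
  0 < lfun Sp X z -> 0 < q -> INR n * q = xn ^ 2 -> 10 <= xn ->
  Rbar_le
    (Vcap Sp (fun w =>
        sum1 (fun i => Xs i w) n >= xn * sqrt (sum1 (fun i => Xs i w ^ 2) n) /\
        sum1 (fun i => Xs i w ^ 2) n >= 9 * INR n * lfun Sp X z))
    (Finite (exp (- xn ^ 2))).
Proof.
  intros hz hMz hlz hlpos hq hnq hxn. pose proof eta0_bounds.
  eapply Rbar_le_trans.
  { apply (Vcap_self_normalized_le Sp X Xs hX hXs hind hsd z 12000 (1 / 2))
      with (n := n) (x := xn); try lra.
    - intros w [e1 e2]. split; auto.
      rewrite hlz, <- Rmult_assoc, (Rmult_assoc 9), hnq in e2. exact e2.
    - apply (E_le_exp_ramp_level Sp X hX eta0 M ltac:(lra) hI z q); lra.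
    - apply (E_le_exp_clip_level Sp X hX hE0 eta0 M ltac:(lra) hI hIII z q); lra. }
  cbn [Rbar_le]. rewrite ramp_constant_eq.
  apply two_exp_le; [nra | exact hnq | lra | apply clip_constant_bounds].
Qed.

End Conclusion.

Theorem proposition4p1 (Omega : Type) (Sp : SLESpace Omega)
  (X : Omega -> R) (Xs : nat -> Omega -> R) (x : nat -> R) :
  H Sp X ->
  (forall n, (1 <= n)%nat -> H Sp (Xs n)) ->
  indep_seq Sp Xs ->
  (forall n, (1 <= n)%nat -> same_dist Sp (Xs n) X) ->
  E Sp X = Finite 0 -> Elow Sp X = Finite 0 ->
  (* (I)  V(|X| >= y) = o(y^{-2} l(y)) as y -> oo *)
  (forall eps, 0 < eps -> exists M, forall y, M <= y ->
     Rbar_le (Vcap Sp (fun w => y <= Rabs (X w)))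
             (Finite (eps * (lfun Sp X y / y ^ 2)))) ->
  (* (II) limsup_{y->oo} E[X^2/\y^2] / Elow[X^2/\y^2] < oo *)
  (exists K M, forall y, M <= y ->
     exists lo, Elow Sp (fun w => Rmin (X w ^ 2) (y ^ 2)) = Finite lo /\ 0 < lo /\
       lfun Sp X y / lo <= K) ->
  (* (III) E[(|X| - c)^+] -> 0 as c -> oo *)
  (forall eps, 0 < eps -> exists M, forall c, M <= c ->
     Rbar_le (E Sp (fun w => Rmax (Rabs (X w) - c) 0)) (Finite eps)) ->
  (* (IV) x_n -> oo and x_n = o(sqrt n) *)
  (forall A, exists N, forall n, (N <= n)%nat -> A <= x n) ->
  (forall eps, 0 < eps -> exists N, forall n, (N <= n)%nat ->
     Rabs (x n) <= eps * sqrt (INR n)) ->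
  (* conclusion: V(S_n >= x_n V_n, V_n^2 >= 9 n l(z_n)) <= exp(-x_n^2 + o(x_n^2)) *)
  forall eps, 0 < eps -> exists N, forall n, (N <= n)%nat ->
    Rbar_le
      (Vcap Sp (fun w =>
          sum1 (fun i => Xs i w) n >= x n * sqrt (sum1 (fun i => Xs i w ^ 2) n) /\
          sum1 (fun i => Xs i w ^ 2) n >= 9 * INR n * lfun Sp X (zn Sp X (x n) n)))
      (Finite (exp (- x n ^ 2 + eps * x n ^ 2))).
Proof.
  intros hX hXs hind hsd hE0 _ hI hII hIII hxinf hxo eps heps.
  destruct (hI eta0 (proj1 eta0_bounds)) as [M hM].
  destruct (zn_level Sp X hX M hII hIII) as [qmax [hqmax hlev]].
  destruct (hxinf 10) as [N1 hN1].
  destruct (hxo (sqrt qmax) (sqrt_lt_R0 _ hqmax)) as [N2 hN2].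
  exists (Nat.max 1 (Nat.max N1 N2)). intros n hn.
  specialize (hN1 n ltac:(lia)). specialize (hN2 n ltac:(lia)).
  assert (hn0 : 0 < INR n) by (apply lt_0_INR; lia).
  assert (hq : 0 < x n ^ 2 / INR n <= qmax)
    by (split; [apply Rdiv_lt_0_compat; nra | apply sq_div_le_of_abs_le; lra]).
  destruct (hlev (x n) n hq) as [hz [hMz [hlz hlpos]]].
  eapply Rbar_le_trans.
  - apply (Vcap_level_le Sp X Xs hX hXs hind hsd hE0 M hM hIII _ (x n ^ 2 / INR n));
      auto; [lra | field; lra].
  - apply exp_le_compat. nra.
Qed.
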